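(* Let $h\ge2$ and let $r_1<s_1<r_2<s_2<\dots<s_{h-1}<r_h$ be real numbers. Let $P\in\mathbb{R}[X]$ be a polynomial of degree $2h$ with positive leading coefficient such that $P(X)>0$ for all $X\in\mathbb{R}$ and $P'(X)=c\,(X-r_h)\prod_{j=1}^{h-1}(X-r_j)(X-s_j)$ for some constant $c>0$. Write $P(X)=\kappa\prod_{j=1}^h\big((X-a_j)^2+b_j^2\big)$ with $\kappa>0$, $a_j,b_j\in\mathbb{R}$, $b_j>0$. Identify $\mathbb{R}^3=\mathbb{C}\times\mathbb{R}$, let $\xi=e^{2\pi i/3}$, and set $w_j^i=(\xi^ib_j,a_j)$ for $1\le j\le h$, $1\le i\le 3$. Let $F(x)=\prod_{j=1}^h\prod_{i=1}^3|x-w_j^i|^2$. Then the $3h$ points $w_j^i$ are pairwise distinct and: (1) the points $(0,r_j)$, $1\le j\le h$, are nondegenerate local minima of $F$ which are not absolute minima; (2) the points $(0,s_j)$, $1\le j\le h-1$, are nondegenerate critical points of $F$ of negativity index $1$; (3) the $3h$ points $w_j^i$ are the absolute minima of $F$.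
   Context: $|\cdot|$ is the Euclidean norm on $\mathbb{R}^3$. The negativity index of a nondegenerate critical point is the number of negative eigenvalues of the Hessian. *)

From Stdlib Require Import Reals Lra.
Open Scope R_scope.

(* R^3, identified with C x R as (Re z, Im z, t). *)
Definition R3 : Type := (R * R * R)%type.

Definition c1 (x : R3) : R := fst (fst x).
Definition c2 (x : R3) : R := snd (fst x).
Definition c3 (x : R3) : R := snd x.

Definition coord (i : nat) (x : R3) : R :=
  match i with 0%nat => c1 x | 1%nat => c2 x | _ => c3 x end.

Definition vadd (x y : R3) : R3 := (c1 x + c1 y, c2 x + c2 y, c3 x + c3 y).
Definition vscale (t : R) (x : R3) : R3 := (t * c1 x, t * c2 x, t * c3 x).
Definition dot (x y : R3) : R := c1 x * c1 y + c2 x * c2 y + c3 x * c3 y.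

Definition dist2 (x y : R3) : R :=
  (c1 x - c1 y) ^ 2 + (c2 x - c2 y) ^ 2 + (c3 x - c3 y) ^ 2.
Definition dist (x y : R3) : R := sqrt (dist2 x y).

Definition e (i : nat) : R3 :=
  match i with 0%nat => (1, 0, 0) | 1%nat => (0, 1, 0) | _ => (0, 0, 1) end.

Fixpoint prodR (n : nat) (f : nat -> R) : R :=
  match n with
  | O => 1
  | S m => prodR m f * f (S m)
  end.

Definition partial_at (f : R3 -> R) (i : nat) (x : R3) (l : R) : Prop :=
  derivable_pt_lim (fun t => f (vadd x (vscale t (e i)))) 0 l.

Definition critical_point (f : R3 -> R) (x : R3) : Prop :=
  forall i, (i < 3)%nat -> partial_at f i x 0.

Definition is_hessian (f : R3 -> R) (x : R3) (H : nat -> nat -> R) : Prop :=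
  exists g : nat -> R3 -> R,
    (forall i y, (i < 3)%nat -> partial_at f i y (g i y)) /\
    (forall i j, (i < 3)%nat -> (j < 3)%nat -> partial_at (g i) j x (H i j)).

Definition det3 (H : nat -> nat -> R) : R :=
    H 0%nat 0%nat * (H 1%nat 1%nat * H 2%nat 2%nat - H 1%nat 2%nat * H 2%nat 1%nat)
  - H 0%nat 1%nat * (H 1%nat 0%nat * H 2%nat 2%nat - H 1%nat 2%nat * H 2%nat 0%nat)
  + H 0%nat 2%nat * (H 1%nat 0%nat * H 2%nat 1%nat - H 1%nat 1%nat * H 2%nat 0%nat).

Definition matvec (H : nat -> nat -> R) (v : R3) : R3 :=
  (H 0%nat 0%nat * c1 v + H 0%nat 1%nat * c2 v + H 0%nat 2%nat * c3 v,
   H 1%nat 0%nat * c1 v + H 1%nat 1%nat * c2 v + H 1%nat 2%nat * c3 v,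
   H 2%nat 0%nat * c1 v + H 2%nat 1%nat * c2 v + H 2%nat 2%nat * c3 v).

Definition nondegenerate_critical_point (f : R3 -> R) (x : R3) : Prop :=
  critical_point f x /\ exists H, is_hessian f x H /\ det3 H <> 0.

Definition is_neg (t : R) : nat := if Rlt_dec t 0 then 1%nat else 0%nat.

(* H (symmetric 3x3) has exactly k negative eigenvalues counted with
   multiplicity: the eigenvalues in an orthonormal eigenbasis. *)
Definition num_neg_eigenvalues (H : nat -> nat -> R) (k : nat) : Prop :=
  exists (v : nat -> R3) (lam : nat -> R),
    (forall m n, (m < 3)%nat -> (n < 3)%nat ->
        dot (v m) (v n) = if Nat.eqb m n then 1 else 0) /\
    (forall m, (m < 3)%nat -> matvec H (v m) = vscale (lam m) (v m)) /\
    (is_neg (lam 0%nat) + is_neg (lam 1%nat) + is_neg (lam 2%nat) = k)%nat.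

Definition negativity_index (f : R3 -> R) (x : R3) (k : nat) : Prop :=
  exists H, is_hessian f x H /\ num_neg_eigenvalues H k.

Definition local_min (f : R3 -> R) (x : R3) : Prop :=
  exists delta, delta > 0 /\ forall y, dist y x < delta -> f x <= f y.

Definition absolute_min (f : R3 -> R) (x : R3) : Prop :=
  forall y, f x <= f y.

Definition wpt (a b : nat -> R) (j i : nat) : R3 :=
  (b j * cos (2 * PI * INR i / 3), b j * sin (2 * PI * INR i / 3), a j).

Definition Ffun (h : nat) (a b : nat -> R) (x : R3) : R :=
  prodR h (fun j => prodR 3 (fun i => dist2 x (wpt a b j i))).

(* The three points w_j^i, i = 1..3, are equidistant from every point of the
   axis z = 0, and F(0, 0, t) = (P(t) / kappa)^3.  Writing y = (z, t) and
   u = |z|^2, the j-th triple contributes the factor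
   A^3 - 3 b_j^2 u A - 2 b_j^3 Re(z^3) with A = u + (t - a_j)^2 + b_j^2.
   Hence the critical points r_j, s_j of P give critical points of F on the
   axis, with Hessian diag(alpha, alpha, 3 (P/kappa)^2 P''/kappa); alpha > 0
   because some a_j differs from t (P' has two distinct roots), and the
   interlacing of the simple roots of P' gives P''(r_j) > 0 > P''(s_j).
   At r_j, the factor with a_j <> r_j gains a multiple of u off the axis,
   which beats the O(|z| u) losses of all factors: a genuine local minimum.
   The zeros of F >= 0 are the w_j^i; they are distinct, since two equal
   triples would make (X - a_j)^2 + b_j^2 a repeated factor of P, hence a
   factor of P', whose roots are all real. *)

From Pilot Require Import Defs.
From Stdlib Require Import Reals Lra Lia Psatz FunctionalExtensionality Classical.
From Coquelicot Require Import Coquelicot.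
From mathcomp Require ssreflect ssrfun ssrbool eqtype ssrnat seq fintype bigop.
From mathcomp Require ssralg ssrnum poly polydiv Rstruct.
Open Scope R_scope.

Lemma prodR_ext n f g :
  (forall j, (1 <= j <= n)%nat -> f j = g j) -> prodR n f = prodR n g.
Proof.
induction n as [|n IH]; simpl; intros H; auto.
rewrite IH by (intros; apply H; lia). rewrite (H (S n)) by lia. reflexivity.
Qed.

Lemma prodR_mul n f g : prodR n (fun j => f j * g j) = prodR n f * prodR n g.
Proof. induction n as [|n IH]; simpl; [ring | rewrite IH; ring]. Qed.

Lemma prodR_pow n f k : prodR n (fun j => f j ^ k) = prodR n f ^ k.
Proof.
induction n as [|n IH]; simpl; [now rewrite pow1 | now rewrite IH, Rpow_mult_distr].
Qed.

Lemma prodR_gt0 n f : (forall j, (1 <= j <= n)%nat -> 0 < f j) -> 0 < prodR n f.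
Proof.
induction n as [|n IH]; simpl; intros H; [lra|].
apply Rmult_lt_0_compat; [apply IH; intros; apply H; lia | apply H; lia].
Qed.

Lemma prodR_ge0 n f : (forall j, (1 <= j <= n)%nat -> 0 <= f j) -> 0 <= prodR n f.
Proof.
induction n as [|n IH]; simpl; intros H; [lra|].
apply Rmult_le_pos; [apply IH; intros; apply H; lia | apply H; lia].
Qed.

Lemma prodR_le n f g :
  (forall j, (1 <= j <= n)%nat -> 0 <= f j <= g j) -> prodR n f <= prodR n g.
Proof.
induction n as [|n IH]; simpl; intros H; [lra|].
assert (Hfg : 0 <= f (S n) <= g (S n)) by (apply H; lia).
assert (0 <= prodR n f) by (apply prodR_ge0; intros j Hj; apply H; lia).
apply Rmult_le_compat; try lra; apply IH; intros; apply H; lia.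
Qed.

Lemma prodR_eq0 n f m : (1 <= m <= n)%nat -> f m = 0 -> prodR n f = 0.
Proof.
induction n as [|n IH]; simpl; intros Hm Hf; [lia|].
destruct (Nat.eq_dec m (S n)) as [->|]; [rewrite Hf; ring | rewrite IH; auto; [ring | lia]].
Qed.

Lemma prodR_eq0_inv n f : prodR n f = 0 -> exists j, (1 <= j <= n)%nat /\ f j = 0.
Proof.
induction n as [|n IH]; simpl; intros H; [lra|].
destruct (Rmult_integral _ _ H) as [H0|H0].
- destruct (IH H0) as [j [Hj Hf]]; exists j; split; auto; lia.
- exists (S n); split; auto; lia.
Qed.

Lemma prodR_factor_out n f m : (1 <= m <= n)%nat ->
  prodR n f = f m * prodR n (fun j => if Nat.eqb j m then 1 else f j).
Proof.
induction n as [|n IH]; intros Hm; [lia|]. cbn [prodR].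
destruct (Nat.eqb_spec (S n) m) as [<-|Hne].
- rewrite (prodR_ext n (fun j => if Nat.eqb j (S n) then 1 else f j) f); [ring|].
  intros j Hj; destruct (Nat.eqb_spec j (S n)); auto; lia.
- rewrite IH by lia; ring.
Qed.

Lemma prodR_ge_factor n f m : (1 <= m <= n)%nat ->
  (forall j, (1 <= j <= n)%nat -> 1 <= f j) -> f m <= prodR n f.
Proof.
intros Hm H. rewrite (prodR_factor_out n f m Hm).
assert (1 <= prodR n (fun j => if Nat.eqb j m then 1 else f j)).
{ clear Hm; induction n as [|n IH]; cbn [prodR]; [lra|].
  assert (1 <= (if Nat.eqb (S n) m then 1 else f (S n))) by
    (destruct (Nat.eqb (S n) m); [lra | apply H; lia]).
  assert (1 <= prodR n (fun j => if Nat.eqb j m then 1 else f j))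
    by (apply IH; intros; apply H; lia).
  nra. }
assert (1 <= f m) by (apply H; lia). nra.
Qed.

Fixpoint sumR (n : nat) (f : nat -> R) : R :=
  match n with O => 0 | S m => sumR m f + f (S m) end.

Lemma sumR_scal n w f : sumR n (fun j => w * f j) = w * sumR n f.
Proof. induction n as [|n IH]; simpl; [ring | rewrite IH; ring]. Qed.

Lemma sumR_ge0 n f : (forall j, (1 <= j <= n)%nat -> 0 <= f j) -> 0 <= sumR n f.
Proof.
induction n as [|n IH]; simpl; intros H; [lra|].
assert (0 <= f (S n)) by (apply H; lia).
assert (0 <= sumR n f) by (apply IH; intros; apply H; lia). lra.
Qed.

Lemma sumR_ge_term n f m : (forall j, (1 <= j <= n)%nat -> 0 <= f j) ->
  (1 <= m <= n)%nat -> f m <= sumR n f.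
Proof.
induction n as [|n IH]; simpl; intros H Hm; [lia|].
assert (0 <= f (S n)) by (apply H; lia).
destruct (Nat.eq_dec m (S n)) as [->|].
- assert (0 <= sumR n f) by (apply sumR_ge0; intros; apply H; lia). lra.
- assert (f m <= sumR n f) by (apply IH; [intros; apply H; lia | lia]). lra.
Qed.

Lemma prodR_one_sub_ge n x : (forall j, (1 <= j <= n)%nat -> 0 <= x j) ->
  sumR n x <= 1 -> 1 - sumR n x <= prodR n (fun j => 1 - x j).
Proof.
induction n as [|n IH]; simpl; intros H Hs; [lra|].
assert (0 <= x (S n)) by (apply H; lia).
assert (0 <= sumR n x) by (apply sumR_ge0; intros; apply H; lia).
assert (1 - sumR n x <= prodR n (fun j => 1 - x j)) by (apply IH; [intros; apply H; lia | lra]).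
nra.
Qed.

Lemma prodR_gain_loss n p q m : (1 <= m <= n)%nat ->
  (forall j, (1 <= j <= n)%nat -> 0 <= p j /\ 0 <= q j) ->
  3 * sumR n q <= p m -> sumR n q <= 1 / 2 ->
  1 <= prodR n (fun j => 1 + p j) * prodR n (fun j => 1 - q j).
Proof.
intros Hm H Hgain Hloss.
assert (Hp : 1 + p m <= prodR n (fun j => 1 + p j))
  by (apply (prodR_ge_factor n (fun j => 1 + p j) m Hm); intros j Hj; destruct (H j Hj); lra).
assert (Hq : 1 - sumR n q <= prodR n (fun j => 1 - q j))
  by (apply prodR_one_sub_ge; [intros j Hj; apply H, Hj | lra]).
assert (0 <= sumR n q) by (apply sumR_ge0; intros j Hj; apply H, Hj).
apply (Rle_trans _ ((1 + p m) * (1 - sumR n q))); [nra|].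
apply Rmult_le_compat; lra.
Qed.

Fixpoint minR (n : nat) (g : nat -> R) : R :=
  match n with O => 1 | S k => Rmin (minR k g) (g (S k)) end.

Lemma minR_le n g j : (1 <= j <= n)%nat -> minR n g <= g j.
Proof.
induction n as [|n IH]; simpl; intros Hj; [lia|].
destruct (Nat.eq_dec j (S n)) as [->|]; [apply Rmin_r|].
eapply Rle_trans; [apply Rmin_l | apply IH; lia].
Qed.

Lemma minR_gt0 n g : (forall j, (1 <= j <= n)%nat -> 0 < g j) -> 0 < minR n g.
Proof.
induction n as [|n IH]; simpl; intros H; [lra|].
apply Rmin_glb_lt; [apply IH; intros; apply H; lia | apply H; lia].
Qed.

(* [prod_deriv n f fd] is the derivative of a product of factors with
   values [f] and derivatives [fd]; [prod_deriv2 n f fk fi fik] is the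
   derivative of [prod_deriv n f fi] when [fk], [fik] are the derivatives
   of [f], [fi]. *)
Fixpoint prod_deriv (n : nat) (f fd : nat -> R) : R :=
  match n with
  | O => 0
  | S m => prod_deriv m f fd * f (S m) + prodR m f * fd (S m)
  end.

Fixpoint prod_deriv2 (n : nat) (f fk fi fik : nat -> R) : R :=
  match n with
  | O => 0
  | S m => prod_deriv2 m f fk fi fik * f (S m) + prod_deriv m f fi * fk (S m)
           + prod_deriv m f fk * fi (S m) + prodR m f * fik (S m)
  end.

Lemma derivable_pt_lim_prodR n (f : nat -> R -> R) (fd : nat -> R) x :
  (forall j, derivable_pt_lim (f j) x (fd j)) ->
  derivable_pt_lim (fun t => prodR n (fun j => f j t)) x (prod_deriv n (fun j => f j x) fd).
Proof.
intros H; induction n as [|n IH]; simpl; [apply derivable_pt_lim_const|].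
apply (derivable_pt_lim_mult (fun t => prodR n (fun j => f j t)) (f (S n))); auto.
Qed.

Lemma derivable_pt_lim_prod_deriv n (f fi : nat -> R -> R) (fk fik : nat -> R) x :
  (forall j, derivable_pt_lim (f j) x (fk j)) ->
  (forall j, derivable_pt_lim (fi j) x (fik j)) ->
  derivable_pt_lim (fun t => prod_deriv n (fun j => f j t) (fun j => fi j t)) x
    (prod_deriv2 n (fun j => f j x) fk (fun j => fi j x) fik).
Proof.
intros Hf Hfi; induction n as [|n IH]; simpl; [apply derivable_pt_lim_const|].
rewrite Rplus_assoc.
apply (derivable_pt_lim_plus
  (fun t => prod_deriv n (fun j => f j t) (fun j => fi j t) * f (S n) t)
  (fun t => prodR n (fun j => f j t) * fi (S n) t)).
- apply (derivable_pt_lim_mult (fun t => prod_deriv n (fun j => f j t) (fun j => fi j t))); auto.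
- apply (derivable_pt_lim_mult (fun t => prodR n (fun j => f j t))); auto.
  apply derivable_pt_lim_prodR; auto.
Qed.

Lemma ex_derive_prodR n (f : nat -> R -> R) x :
  (forall j, ex_derive (f j) x) -> ex_derive (fun t => prodR n (fun j => f j t)) x.
Proof.
intros H; induction n as [|n IH]; simpl; [apply ex_derive_const|].
apply (ex_derive_mult (fun t => prodR n (fun j => f j t)) (f (S n))); auto.
Qed.

Lemma prod_deriv_0 n f : prod_deriv n f (fun _ => 0) = 0.
Proof. induction n as [|n IH]; simpl; [|rewrite IH]; ring. Qed.

Lemma prod_deriv2_0l n f fk fik : prod_deriv2 n f fk (fun _ => 0) fik = prod_deriv n f fik.
Proof. induction n as [|n IH]; simpl; [|rewrite IH, prod_deriv_0]; ring. Qed.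

Lemma prod_deriv2_0 n f fi : prod_deriv2 n f (fun _ => 0) fi (fun _ => 0) = 0.
Proof. induction n as [|n IH]; simpl; [|rewrite IH, prod_deriv_0]; ring. Qed.

Lemma prod_deriv_ext n f fd gd :
  (forall j, (1 <= j <= n)%nat -> fd j = gd j) -> prod_deriv n f fd = prod_deriv n f gd.
Proof.
induction n as [|n IH]; simpl; intros H; auto.
rewrite IH by (intros; apply H; lia). rewrite (H (S n)) by lia. reflexivity.
Qed.

Lemma prod_deriv_scal n f k fd : prod_deriv n f (fun j => k * fd j) = k * prod_deriv n f fd.
Proof. induction n as [|n IH]; simpl; [|rewrite IH]; ring. Qed.

Lemma prod_deriv_ge0 n f fd : (forall j, (1 <= j <= n)%nat -> 0 < f j /\ 0 <= fd j) ->
  0 <= prod_deriv n f fd.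
Proof.
induction n as [|n IH]; simpl; intros H; [lra|].
assert (0 <= prod_deriv n f fd) by (apply IH; intros; apply H; lia).
assert (0 < prodR n f) by (apply prodR_gt0; intros; apply H; lia).
destruct (H (S n)); [lia|]. nra.
Qed.

Lemma prod_deriv_gt0 n f fd m : (forall j, (1 <= j <= n)%nat -> 0 < f j /\ 0 <= fd j) ->
  (1 <= m <= n)%nat -> 0 < fd m -> 0 < prod_deriv n f fd.
Proof.
induction n as [|n IH]; simpl; intros H Hm Hfm; [lia|].
assert (0 <= prod_deriv n f fd) by (apply prod_deriv_ge0; intros; apply H; lia).
assert (0 < prodR n f) by (apply prodR_gt0; intros; apply H; lia).
destruct (H (S n)) as [Hf1 Hf2]; [lia|].
destruct (Nat.eq_dec m (S n)) as [->|]; [nra|].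
assert (0 < prod_deriv n f fd) by (apply IH; auto; [intros; apply H; lia | lia]). nra.
Qed.

(** * The factor of a triple of points *)

Definition quad (a b t : R) : R := (t - a) ^ 2 + b ^ 2.

Definition triple_factor (a b : R) (y : R3) : R :=
  let u := Defs.c1 y ^ 2 + Defs.c2 y ^ 2 in let A := u + b ^ 2 + (Defs.c3 y - a) ^ 2 in
  A ^ 3 - 3 * b ^ 2 * u * A - 2 * b ^ 3 * (Defs.c1 y ^ 3 - 3 * Defs.c1 y * Defs.c2 y ^ 2).

Lemma cos_sin_2PI_3 : cos (2 * PI * 1 / 3) = -1/2 /\ sin (2 * PI * 1 / 3) = sqrt 3 / 2.
Proof.
replace (2 * PI * 1 / 3) with (2 * (PI / 3)) by field.
rewrite cos_2a_cos, sin_2a, cos_PI3, sin_PI3; split; field.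
Qed.

Lemma cos_sin_4PI_3 :
  cos (2 * PI * (1 + 1) / 3) = -1/2 /\ sin (2 * PI * (1 + 1) / 3) = - (sqrt 3 / 2).
Proof.
replace (2 * PI * (1 + 1) / 3) with (PI / 3 + PI) by field.
rewrite neg_cos, neg_sin, cos_PI3, sin_PI3; split; field.
Qed.

Lemma cos_sin_6PI_3 : cos (2 * PI * (1 + 1 + 1) / 3) = 1 /\ sin (2 * PI * (1 + 1 + 1) / 3) = 0.
Proof.
replace (2 * PI * (1 + 1 + 1) / 3) with (2 * PI) by field.
now rewrite cos_2PI, sin_2PI.
Qed.

Lemma three_dist2_expand (y1 y2 y3 a b s : R) : s * s = 3 ->
  1 * ((y1 - b * (-1/2)) ^ 2 + (y2 - b * (s / 2)) ^ 2 + (y3 - a) ^ 2) *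
  ((y1 - b * (-1/2)) ^ 2 + (y2 - b * (- (s / 2))) ^ 2 + (y3 - a) ^ 2) *
  ((y1 - b * 1) ^ 2 + (y2 - b * 0) ^ 2 + (y3 - a) ^ 2) =
  (y1 ^ 2 + y2 ^ 2 + b ^ 2 + (y3 - a) ^ 2) ^ 3
  - 3 * b ^ 2 * (y1 ^ 2 + y2 ^ 2) * (y1 ^ 2 + y2 ^ 2 + b ^ 2 + (y3 - a) ^ 2)
  - 2 * b ^ 3 * (y1 ^ 3 - 3 * y1 * y2 ^ 2).
Proof.
intros Hs.
set (K := (y1 + b / 2) ^ 2 + y2 ^ 2 + b ^ 2 * (s * s) / 4 + (y3 - a) ^ 2).
(* With s = sqrt 3 the first two factors are K - y2 b s and K + y2 b s. *)
transitivity (((y1 - b * 1) ^ 2 + (y2 - b * 0) ^ 2 + (y3 - a) ^ 2)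
  * (K ^ 2 - y2 ^ 2 * b ^ 2 * (s * s)));
  [unfold K; field|].
unfold K; rewrite Hs; field.
Qed.

Lemma prod_dist2_wpt a b j y :
  prodR 3 (fun i => dist2 y (wpt a b j i)) = triple_factor (a j) (b j) y.
Proof.
unfold prodR, dist2, wpt, triple_factor, Defs.c1, Defs.c2, Defs.c3; simpl fst; simpl snd.
destruct cos_sin_2PI_3 as [-> ->], cos_sin_4PI_3 as [-> ->], cos_sin_6PI_3 as [-> ->].
apply three_dist2_expand, sqrt_sqrt; lra.
Qed.

Lemma Ffun_triple_factor h a b y :
  Ffun h a b y = prodR h (fun j => triple_factor (a j) (b j) y).
Proof. apply prodR_ext; intros; apply prod_dist2_wpt. Qed.

Lemma triple_factor_axis a b t : triple_factor a b (0, 0, t) = quad a b t ^ 3.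
Proof. unfold triple_factor, quad, Defs.c1, Defs.c2, Defs.c3; simpl; ring. Qed.

Lemma Ffun_axis h a b t : Ffun h a b (0, 0, t) = prodR h (fun j => quad (a j) (b j) t) ^ 3.
Proof.
rewrite Ffun_triple_factor, <- prodR_pow.
apply prodR_ext; intros; apply triple_factor_axis.
Qed.

Definition triple_factor_grad (i : nat) (a b : R) (y : R3) : R :=
  let y1 := Defs.c1 y in let y2 := Defs.c2 y in let y3 := Defs.c3 y in
  let u := y1 ^ 2 + y2 ^ 2 in let A := u + b ^ 2 + (y3 - a) ^ 2 in
  match i with
  | 0%nat => 3 * A ^ 2 * (2 * y1) - 3 * b ^ 2 * (2 * y1 * A + u * (2 * y1))
             - 2 * b ^ 3 * (3 * y1 ^ 2 - 3 * y2 ^ 2)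
  | 1%nat => 3 * A ^ 2 * (2 * y2) - 3 * b ^ 2 * (2 * y2 * A + u * (2 * y2))
             - 2 * b ^ 3 * (-6 * y1 * y2)
  | _ => 3 * A ^ 2 * (2 * (y3 - a)) - 3 * b ^ 2 * u * (2 * (y3 - a))
  end.

Lemma triple_factor_partial i a b y : (i < 3)%nat ->
  partial_at (triple_factor a b) i y (triple_factor_grad i a b y).
Proof.
intros Hi; destruct y as [[y1 y2] y3]; apply is_derive_Reals.
unfold triple_factor, triple_factor_grad, vadd, vscale, Defs.c1, Defs.c2, Defs.c3.
simpl fst; simpl snd.
destruct i as [|[|[|i]]]; simpl; try lia; auto_derive; auto; ring.
Qed.

Definition triple_factor_hess_axis (i k : nat) (a b t : R) : R :=
  let d := t - a in let Q := b ^ 2 + d ^ 2 in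
  match i, k with
  | 0%nat, 0%nat | 1%nat, 1%nat => 6 * Q * d ^ 2
  | 2%nat, 2%nat => 6 * Q ^ 2 + 24 * d ^ 2 * Q
  | _, _ => 0
  end.

Lemma triple_factor_grad_partial_axis i k a b t : (i < 3)%nat -> (k < 3)%nat ->
  partial_at (triple_factor_grad i a b) k (0, 0, t) (triple_factor_hess_axis i k a b t).
Proof.
intros Hi Hk; apply is_derive_Reals.
unfold triple_factor_hess_axis, triple_factor_grad, vadd, vscale, Defs.c1, Defs.c2, Defs.c3.
simpl fst; simpl snd.
destruct i as [|[|[|i]]]; destruct k as [|[|[|k]]]; simpl; try lia; auto_derive; auto; ring.
Qed.

(** * Quadratic factors of P *)

Definition split_deriv (h : nat) (r s : nat -> R) (c x : R) : R :=
  c * (x - r h) * prodR (h - 1) (fun j => (x - r j) * (x - s j)).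

Section RealPolynomials.
Import ssreflect ssrfun ssrbool eqtype ssrnat seq fintype bigop ssralg ssrnum poly polydiv Rstruct.
Import GRing.Theory Num.Theory.
Local Open Scope ring_scope.

Lemma dvdp_deriv_sqr {F : fieldType} (p q : {poly F}) : q * q %| p -> q %| p^`().
Proof.
case/dvdpP => m ->; rewrite !derivM.
apply: dvdp_add; apply: dvdp_mull; first exact: dvdp_mulIl.
by apply: dvdp_add; [exact: dvdp_mulIr | exact: dvdp_mulIl].
Qed.

Lemma sqr_dvdp_coprime_deriv {F : fieldType} {p q : {poly F}} :
  q * q %| p -> coprimep q p^`() -> size q = 1%N.
Proof.
move=> /dvdp_deriv_sqr dq cq; apply/eqP; rewrite -coprimepp.
exact: coprimep_dvdl dq cq.
Qed.

Lemma poly_horner_inj {D : numDomainType} (p q : {poly D}) :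
  (forall x, p.[x] = q.[x]) -> p = q.
Proof.
move=> Epq; apply/eqP; rewrite -subr_eq0; apply/eqP.
apply: (roots_geq_poly_eq0 (rs := [seq i%:R | i <- iota 0 (size (p - q))])).
- by apply/allP => y _; rewrite rootE hornerD hornerN Epq subrr.
- by rewrite map_inj_uniq ?iota_uniq // => m n /eqP; rewrite eqr_nat => /eqP.
- by rewrite size_map size_iota.
Qed.

Lemma horner_derivable_pt_lim (p : {poly R}) (x : R) :
  derivable_pt_lim (horner p) x (p^`()).[x].
Proof.
elim/poly_ind: p x => [|p c IH] x.
  have -> : horner (0 : {poly R}) = (fun _ => 0%R).
    by apply: functional_extensionality => y; rewrite horner0.
  rewrite deriv0 horner0; exact: derivable_pt_lim_const.
have -> : horner (p * 'X + c%:P) = (fun y => (p.[y] * y + c)%R).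
  by apply: functional_extensionality => y; rewrite hornerMXaddC.
rewrite derivMXaddC hornerD hornerMX addrC.
have := derivable_pt_lim_plus _ _ x _ _
  (derivable_pt_lim_mult _ _ x _ _ (IH x) (derivable_pt_lim_id x)) (derivable_pt_lim_const c x).
by rewrite Rmult_1_r Rplus_0_r.
Qed.

Lemma prodR_big n (f : nat -> R) : prodR n f = \prod_(i < n) f i.+1.
Proof. by elim: n => [|n IH]; [rewrite big_ord0 | rewrite big_ord_recr /= IH]. Qed.

Definition quad_poly (a b : R) : {poly R} := ('X - a%:P) ^+ 2 + (b ^+ 2)%:P.

Lemma horner_quad_poly a b x : (quad_poly a b).[x] = quad a b x.
Proof. by rewrite /quad_poly /quad !hornerE /= Rmult_1_r Rmult_1_r. Qed.

Lemma quad_poly_rootless a b x : b != 0 -> ~~ root (quad_poly a b) x.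
Proof.
move=> hb; rewrite rootE /quad_poly !hornerE paddr_eq0 ?sqr_ge0 //.
by rewrite negb_and orbC sqrf_eq0 hb.
Qed.

Lemma size_quad_poly a b : size (quad_poly a b) = 3%N.
Proof.
rewrite /quad_poly size_polyDl size_exp_XsubC //.
by rewrite (leq_ltn_trans (size_polyC_leq1 _)).
Qed.

Definition split_deriv_poly (h : nat) (r s : nat -> R) (c : R) : {poly R} :=
  c *: (('X - (r h)%:P) * \prod_(i < Nat.sub h 1) (('X - (r i.+1)%:P) * ('X - (s i.+1)%:P))).

Lemma horner_split_deriv_poly h r s c x :
  (split_deriv_poly h r s c).[x] = split_deriv h r s c x.
Proof.
rewrite /split_deriv prodR_big hornerZ hornerM horner_prod hornerXsubC mulrA.
by congr (_ * _); apply: eq_bigr => i _; rewrite hornerM !hornerXsubC.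
Qed.

Lemma coprimep_split_deriv_poly h r s c (q : {poly R}) : c != 0 ->
  (forall x, ~~ root q x) -> coprimep q (split_deriv_poly h r s c).
Proof.
move=> hc hq; rewrite coprimepZr // coprimepMr coprimep_XsubC hq /=.
apply: (big_ind (coprimep q)); first exact: coprimep1.
  by move=> ? ? h1 h2; rewrite coprimepMr h1 h2.
by move=> i _; rewrite coprimepMr !coprimep_XsubC !hq.
Qed.

(* A repeated factor (X - a)^2 + b^2, b <> 0, of P would divide P', which is
   a product of real linear factors. *)
Lemma quad_factors_distinct h r s (P : R -> R) c kappa a b j k :
  c <> 0 -> kappa <> 0 ->
  (forall x, derivable_pt_lim P x (split_deriv h r s c x)) ->
  (forall x, P x = Rmult kappa (prodR h (fun j => quad (a j) (b j) x))) ->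
  (0 < j)%coq_nat -> (j <= h)%coq_nat -> (0 < k)%coq_nat -> (k <= h)%coq_nat -> j <> k ->
  b j <> 0 -> (a j, b j) <> (a k, b k).
Proof.
move=> /eqP hc /eqP hk Hder Hfact /ltP j0 /leP jh /ltP k0 /leP kh jk /eqP bj0 [ajk bjk].
pose Pp := kappa *: \prod_(i < h) quad_poly (a i.+1) (b i.+1).
have PE : horner Pp = P.
  apply: functional_extensionality => x.
  rewrite Hfact prodR_big hornerZ horner_prod; congr (_ * _).
  by apply: eq_bigr => i _; rewrite horner_quad_poly.
have dPE : Pp^`() = split_deriv_poly h r s c.
  apply: poly_horner_inj => x; rewrite horner_split_deriv_poly.
  apply: (uniqueness_limite (horner Pp) x); first exact: horner_derivable_pt_lim.
  by rewrite PE; exact: Hder.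
have sqr : quad_poly (a j) (b j) * quad_poly (a j) (b j) %| Pp.
  case: j j0 jh jk ajk bjk {bj0} => // j' _ jh jk ajk bjk.
  case: k k0 kh jk ajk bjk => // k' _ kh jk ajk bjk.
  have ojk : Ordinal jh != Ordinal kh by apply/eqP => -[E]; apply: jk; rewrite E.
  rewrite /Pp dvdpZr // (bigD1 (Ordinal jh)) // (bigD1 (Ordinal kh)) /=; last by rewrite eq_sym.
  by rewrite -ajk -bjk mulrA dvdp_mulIl.
have := sqr_dvdp_coprime_deriv sqr.
rewrite dPE coprimep_split_deriv_poly // => [/(_ isT)|x]; last exact: quad_poly_rootless.
by rewrite size_quad_poly.
Qed.
End RealPolynomials.

(** * The function F near the axis *)

Lemma R3_eq (x1 x2 x3 y1 y2 y3 : R) :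
  x1 = y1 -> x2 = y2 -> x3 = y3 -> (x1, x2, x3) = (y1, y2, y3).
Proof. intros; now subst. Qed.

Definition diag3 (d : nat -> R) (i k : nat) : R := if Nat.eqb i k then d i else 0.

Lemma det3_diag3 d : det3 (diag3 d) = d 0%nat * d 1%nat * d 2%nat.
Proof. unfold det3, diag3; simpl; ring. Qed.

Lemma num_neg_eigenvalues_diag3 d :
  num_neg_eigenvalues (diag3 d) (is_neg (d 0%nat) + is_neg (d 1%nat) + is_neg (d 2%nat)).
Proof.
exists e, d; split; [|split]; [| |reflexivity].
- intros m n Hm Hn.
  destruct m as [|[|[|m]]]; destruct n as [|[|[|n]]]; try lia;
    unfold dot, e, Defs.c1, Defs.c2, Defs.c3; simpl; ring.
- intros m Hm.
  destruct m as [|[|[|m]]]; try lia;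
    unfold matvec, vscale, diag3, e, Defs.c1, Defs.c2, Defs.c3; simpl; apply R3_eq; ring.
Qed.

Lemma vadd_vscale_0 y i : vadd y (vscale 0 (e i)) = y.
Proof.
destruct y as [[y1 y2] y3]; destruct i as [|[|i]];
  unfold vadd, vscale, e, Defs.c1, Defs.c2, Defs.c3; simpl; apply R3_eq; ring.
Qed.

Lemma vadd_axis t s : vadd (0, 0, t) (vscale s (e 2)) = (0, 0, t + s).
Proof. unfold vadd, vscale, e, Defs.c1, Defs.c2, Defs.c3; simpl; apply R3_eq; ring. Qed.

Lemma derivable_pt_lim_shift f t l :
  derivable_pt_lim f t l -> derivable_pt_lim (fun s => f (t + s)) 0 l.
Proof.
intros H; replace l with (l * 1) by ring.
apply (derivable_pt_lim_comp (fun s => t + s) f).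
- apply is_derive_Reals; auto_derive; auto; ring.
- now rewrite Rplus_0_r.
Qed.

Lemma partial_at_axis f t l :
  derivable_pt_lim (fun s => f (0, 0, s)) t l -> partial_at f 2 (0, 0, t) l.
Proof.
intros H; unfold partial_at.
replace (fun s => f (vadd (0, 0, t) (vscale s (e 2)))) with (fun s => f (0, 0, t + s))
  by (apply functional_extensionality; intros; now rewrite vadd_axis).
now apply (derivable_pt_lim_shift (fun s => f (0, 0, s))).
Qed.

Lemma triple_factor_expand a b y1 y2 t : triple_factor a b (y1, y2, t) =
  quad a b t ^ 3 + 3 * (y1 ^ 2 + y2 ^ 2) * (t - a) ^ 2 * quad a b t
  + 3 * (y1 ^ 2 + y2 ^ 2) ^ 2 * (t - a) ^ 2 + (y1 ^ 2 + y2 ^ 2) ^ 3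
  - 2 * b ^ 3 * (y1 ^ 3 - 3 * y1 * y2 ^ 2).
Proof. unfold triple_factor, quad, Defs.c1, Defs.c2, Defs.c3; simpl; ring. Qed.

Lemma re_cube_le y1 y2 : y1 ^ 3 - 3 * y1 * y2 ^ 2 <= 3 * Rabs y1 * (y1 ^ 2 + y2 ^ 2).
Proof.
unfold Rabs; destruct (Rcase_abs y1).
- assert (0 <= - y1 * (4 * y1 ^ 2)) by (apply Rmult_le_pos; [lra | nra]).
  assert (3 * - y1 * (y1 ^ 2 + y2 ^ 2) - (y1 ^ 3 - 3 * y1 * y2 ^ 2) = - y1 * (4 * y1 ^ 2)) by ring.
  lra.
- assert (0 <= y1 * (2 * y1 ^ 2 + 6 * y2 ^ 2)) by (apply Rmult_le_pos; [lra | nra]).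
  assert (3 * y1 * (y1 ^ 2 + y2 ^ 2) - (y1 ^ 3 - 3 * y1 * y2 ^ 2) = y1 * (2 * y1 ^ 2 + 6 * y2 ^ 2))
    by ring.
  lra.
Qed.

(* The terms 3 u^2 d^2 + u^3 of the expansion are dropped, and
   2 b^3 Re(z^3) <= 6 b^3 |y1| u is charged against Q^3 >= b^6. *)
Lemma triple_factor_lower_bound a b y1 y2 t : 0 < b ->
  6 * Rabs y1 * (y1 ^ 2 + y2 ^ 2) / b ^ 3 <= 1 ->
  0 <= quad a b t ^ 3 * (1 + 3 * (y1 ^ 2 + y2 ^ 2) * (t - a) ^ 2 / quad a b t ^ 2)
         * (1 - 6 * Rabs y1 * (y1 ^ 2 + y2 ^ 2) / b ^ 3)
    <= triple_factor a b (y1, y2, t).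
Proof.
intros Hb Hn; rewrite triple_factor_expand; pose proof (re_cube_le y1 y2) as HW.
set (u := y1 ^ 2 + y2 ^ 2) in *. set (d := t - a) in *. set (Q := quad a b t) in *.
set (n := 6 * Rabs y1 * u / b ^ 3) in *.
assert (Hu : 0 <= u) by (unfold u; nra).
assert (Hd : 0 <= d ^ 2) by apply pow2_ge_0.
assert (Hb3 : 0 < b ^ 3) by (apply pow_lt; lra).
assert (HQ : b ^ 2 <= Q) by (unfold Q, quad; fold d; lra).
assert (HQ0 : 0 < Q) by (pose proof (pow_lt b 2 Hb); lra).
assert (HQ3 : b ^ 3 * b ^ 3 <= Q ^ 3)
  by (replace (b ^ 3 * b ^ 3) with ((b ^ 2) ^ 3) by ring; apply pow_incr; nra).
assert (Hy1 : 0 <= Rabs y1) by apply Rabs_pos.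
assert (Hn0 : 0 <= n) by (unfold n; apply Rdiv_le_0_compat; [nra | lra]).
assert (Hp : Q ^ 3 * (3 * u * d ^ 2 / Q ^ 2) = 3 * u * d ^ 2 * Q) by (field; nra).
assert (HQn : 6 * Rabs y1 * u * b ^ 3 <= Q ^ 3 * n).
{ unfold n; replace (Q ^ 3 * (6 * Rabs y1 * u / b ^ 3)) with (6 * Rabs y1 * u * (Q ^ 3 / b ^ 3))
    by (field; lra).
  apply Rmult_le_compat_l; [nra|].
  apply (Rmult_le_reg_r (b ^ 3)); [lra|]. unfold Rdiv; rewrite Rmult_assoc, Rinv_l; lra. }
assert (0 <= Q ^ 3 * (3 * u * d ^ 2 / Q ^ 2))
  by (rewrite Hp; apply Rmult_le_pos; [apply Rmult_le_pos|]; lra).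
split.
- apply Rmult_le_pos; [apply Rmult_le_pos|]; nra.
- replace (Q ^ 3 * (1 + 3 * u * d ^ 2 / Q ^ 2) * (1 - n))
    with (Q ^ 3 + Q ^ 3 * (3 * u * d ^ 2 / Q ^ 2) * (1 - n) - Q ^ 3 * n) by ring.
  rewrite Hp. assert (0 <= 3 * u ^ 2 * d ^ 2) by nra. assert (0 <= u ^ 3) by (apply pow_le; lra).
  nra.
Qed.

Lemma quad_ratio_lower_bound a b r t : 0 < b -> Rabs (t - r) <= Rabs (r - a) / 2 ->
  (r - a) ^ 2 / 4 / (b ^ 2 + 9 / 4 * (r - a) ^ 2) ^ 2 <= (t - a) ^ 2 / quad a b t ^ 2.
Proof.
intros Hb Ht; unfold quad.
pose proof (Rabs_triang_inv (r - a) (r - t)) as H1.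
pose proof (Rabs_triang (r - a) (t - r)) as H2.
replace (r - a - (r - t)) with (t - a) in H1 by ring.
replace (r - a + (t - r)) with (t - a) in H2 by ring.
rewrite (Rabs_minus_sym r t) in H1.
rewrite <- (pow2_abs (t - a)), <- (pow2_abs (r - a)).
set (A := Rabs (r - a)) in *; set (D := Rabs (t - a)) in *.
assert (HA : 0 <= A) by apply Rabs_pos.
assert (HAD : (A / 2) ^ 2 <= D ^ 2 <= (3 / 2 * A) ^ 2) by (split; apply pow_incr; lra).
pose proof (pow_lt b 2 Hb).
destruct (Req_dec A 0) as [HA0|HA0].
{ rewrite HA0; unfold Rdiv; rewrite pow_i, !Rmult_0_l by lia.
  apply Rmult_le_pos; [apply pow2_ge_0 | apply Rlt_le, Rinv_0_lt_compat, pow_lt; nra]. }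
assert (0 < A ^ 2) by (apply pow_lt; lra).
unfold Rdiv at 2 3.
apply Rmult_le_compat; [lra | apply Rlt_le, Rinv_0_lt_compat, pow_lt; lra | nra |].
apply Rinv_le_contravar; [apply pow_lt; nra | apply pow_incr; nra].
Qed.

Lemma dist_axis_lt y1 y2 t t0 rho : Defs.dist (y1, y2, t) (0, 0, t0) < rho ->
  y1 ^ 2 + y2 ^ 2 < rho ^ 2 /\ Rabs y1 < rho /\ Rabs (t - t0) < rho.
Proof.
unfold Defs.dist, dist2, Defs.c1, Defs.c2, Defs.c3; cbn [fst snd]; intros Hd.
set (z := (y1 - 0) ^ 2 + (y2 - 0) ^ 2 + (t - t0) ^ 2) in Hd.
pose proof (pow2_ge_0 y1); pose proof (pow2_ge_0 y2); pose proof (pow2_ge_0 (t - t0)).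
assert (Hz : 0 <= z) by (unfold z; nra).
pose proof (sqrt_pos z).
assert (Hlt : z < rho ^ 2) by (rewrite <- (sqrt_sqrt z Hz); nra).
assert (Hrho : 0 < rho) by lra.
unfold z in Hlt; rewrite !Rminus_0_r in Hlt.
assert (Habs : forall x, x ^ 2 < rho ^ 2 -> Rabs x < rho).
{ intros x Hx; rewrite <- (Rabs_pos_eq rho) by lra.
  apply Rsqr_lt_abs_0; rewrite !Rsqr_pow2; exact Hx. }
split; [lra | split; apply Habs; lra].
Qed.

Section FunctionF.
Variables (h : nat) (a b : nat -> R).

Definition Fgrad (i : nat) (y : R3) : R :=
  prod_deriv h (fun j => triple_factor (a j) (b j) y) (fun j => triple_factor_grad i (a j) (b j) y).

Definition Fhess_axis (t : R) (i k : nat) : R :=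
  prod_deriv2 h (fun j => triple_factor (a j) (b j) (0, 0, t))
    (fun j => triple_factor_grad k (a j) (b j) (0, 0, t))
    (fun j => triple_factor_grad i (a j) (b j) (0, 0, t))
    (fun j => triple_factor_hess_axis i k (a j) (b j) t).

Lemma Ffun_partial i y : (i < 3)%nat -> partial_at (Ffun h a b) i y (Fgrad i y).
Proof.
intros Hi; unfold partial_at.
replace (fun t => Ffun h a b (vadd y (vscale t (e i)))) with
  (fun t => prodR h (fun j => triple_factor (a j) (b j) (vadd y (vscale t (e i)))))
  by (apply functional_extensionality; intros; symmetry; apply Ffun_triple_factor).
pose proof (derivable_pt_lim_prodR h
  (fun j t => triple_factor (a j) (b j) (vadd y (vscale t (e i))))
  (fun j => triple_factor_grad i (a j) (b j) y) 0
  (fun j => triple_factor_partial i (a j) (b j) y Hi)) as H.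
cbv beta in H; now rewrite vadd_vscale_0 in H.
Qed.

Lemma Fgrad_partial_axis t i k : (i < 3)%nat -> (k < 3)%nat ->
  partial_at (Fgrad i) k (0, 0, t) (Fhess_axis t i k).
Proof.
intros Hi Hk; unfold partial_at, Fgrad.
pose proof (derivable_pt_lim_prod_deriv h
  (fun j s => triple_factor (a j) (b j) (vadd (0, 0, t) (vscale s (e k))))
  (fun j s => triple_factor_grad i (a j) (b j) (vadd (0, 0, t) (vscale s (e k))))
  (fun j => triple_factor_grad k (a j) (b j) (0, 0, t))
  (fun j => triple_factor_hess_axis i k (a j) (b j) t) 0
  (fun j => triple_factor_partial k (a j) (b j) (0, 0, t) Hk)
  (fun j => triple_factor_grad_partial_axis i k (a j) (b j) t Hi Hk)) as H.
cbv beta in H; now rewrite vadd_vscale_0 in H.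
Qed.

Lemma triple_factor_grad_horizontal_axis i a0 b0 t :
  (i < 2)%nat -> triple_factor_grad i a0 b0 (0, 0, t) = 0.
Proof.
intros Hi; destruct i as [|[|i]]; try lia;
  unfold triple_factor_grad, Defs.c1, Defs.c2, Defs.c3; simpl; ring.
Qed.

Lemma Fgrad_horizontal_axis i t : (i < 2)%nat -> Fgrad i (0, 0, t) = 0.
Proof.
intros Hi; unfold Fgrad.
rewrite (prod_deriv_ext h _ _ (fun _ => 0))
  by (intros; now apply triple_factor_grad_horizontal_axis).
apply prod_deriv_0.
Qed.

Lemma Fgrad_vertical_axis (g : R -> R) t :
  (forall s, derivable_pt_lim (fun s => Ffun h a b (0, 0, s)) s (g s)) ->
  Fgrad 2 (0, 0, t) = g t.
Proof.
intros Hg.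
apply (uniqueness_limite _ _ _ _ (Ffun_partial 2 (0, 0, t) ltac:(lia))).
now apply partial_at_axis.
Qed.

Definition axis_alpha (t : R) : R :=
  prod_deriv h (fun j => triple_factor (a j) (b j) (0, 0, t))
    (fun j => triple_factor_hess_axis 0 0 (a j) (b j) t).

Definition axis_hessian_diag (t : R) (i : nat) : R :=
  if Nat.eqb i 2 then Fhess_axis t 2 2 else axis_alpha t.

(* The horizontal directions are symmetric, and mixed derivatives vanish on
   the axis because the horizontal gradients of all factors do. *)
Lemma Fhess_axis_diag3 t i k : (i < 3)%nat -> (k < 3)%nat ->
  Fhess_axis t i k = diag3 (axis_hessian_diag t) i k.
Proof.
intros Hi Hk; unfold axis_hessian_diag, Fhess_axis, diag3.
assert (Z : forall i, (i < 2)%nat ->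
  (fun j => triple_factor_grad i (a j) (b j) (0, 0, t)) = (fun _ => 0))
  by (intros; apply functional_extensionality; intros;
      now apply triple_factor_grad_horizontal_axis).
destruct i as [|[|[|i]]]; destruct k as [|[|[|k]]]; try lia; simpl Nat.eqb; cbv iota;
  rewrite ?(Z 0%nat), ?(Z 1%nat) by lia;
  first [ reflexivity | apply prod_deriv2_0
        | rewrite prod_deriv2_0l; first [reflexivity | apply prod_deriv_0] ].
Qed.

Lemma is_hessian_axis t : is_hessian (Ffun h a b) (0, 0, t) (diag3 (axis_hessian_diag t)).
Proof.
exists Fgrad; split; intros; [now apply Ffun_partial|].
rewrite <- Fhess_axis_diag3 by assumption. now apply Fgrad_partial_axis.
Qed.

Lemma Fhess_vertical_axis (g : R -> R) t l :
  (forall s, derivable_pt_lim (fun s => Ffun h a b (0, 0, s)) s (g s)) ->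
  derivable_pt_lim g t l -> Fhess_axis t 2 2 = l.
Proof.
intros Hg Hl.
apply (uniqueness_limite _ _ _ _ (Fgrad_partial_axis t 2 2 ltac:(lia) ltac:(lia))).
apply partial_at_axis.
replace (fun s => Fgrad 2 (0, 0, s)) with g; [exact Hl|].
apply functional_extensionality; intros; symmetry; now apply Fgrad_vertical_axis.
Qed.

Lemma critical_point_axis (g : R -> R) t :
  (forall s, derivable_pt_lim (fun s => Ffun h a b (0, 0, s)) s (g s)) -> g t = 0 ->
  critical_point (Ffun h a b) (0, 0, t).
Proof.
intros Hg Ht i Hi.
assert (Hz : Fgrad i (0, 0, t) = 0).
{ destruct (Nat.lt_ge_cases i 2); [now apply Fgrad_horizontal_axis|].
  replace i with 2%nat by lia; now rewrite (Fgrad_vertical_axis g). }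
pose proof (Ffun_partial i (0, 0, t) Hi) as H; now rewrite Hz in H.
Qed.

Lemma Ffun_ge0 y : 0 <= Ffun h a b y.
Proof.
apply prodR_ge0; intros j _; apply prodR_ge0; intros i _; unfold dist2.
pose proof (pow2_ge_0 (Defs.c1 y - Defs.c1 (wpt a b j i))).
pose proof (pow2_ge_0 (Defs.c2 y - Defs.c2 (wpt a b j i))).
pose proof (pow2_ge_0 (Defs.c3 y - Defs.c3 (wpt a b j i))). lra.
Qed.

Lemma Ffun_wpt j i : (1 <= j <= h)%nat -> (1 <= i <= 3)%nat -> Ffun h a b (wpt a b j i) = 0.
Proof.
intros Hj Hi; apply (prodR_eq0 h _ j Hj), (prodR_eq0 3 _ i Hi); unfold dist2; ring.
Qed.

Lemma dist2_eq0 y w : dist2 y w = 0 -> y = w.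
Proof.
destruct y as [[y1 y2] y3], w as [[w1 w2] w3].
unfold dist2, Defs.c1, Defs.c2, Defs.c3; cbn [fst snd]; intros H.
pose proof (pow2_ge_0 (y1 - w1)); pose proof (pow2_ge_0 (y2 - w2)).
pose proof (pow2_ge_0 (y3 - w3)).
apply R3_eq; apply Rminus_diag_uniq, Rsqr_eq_0; rewrite Rsqr_pow2; lra.
Qed.

Lemma absolute_min_Ffun_iff y : (1 <= h)%nat -> absolute_min (Ffun h a b) y <->
  exists j i, (1 <= j <= h)%nat /\ (1 <= i <= 3)%nat /\ y = wpt a b j i.
Proof.
intros Hh; split.
- intros Hmin; specialize (Hmin (wpt a b 1 1)); rewrite Ffun_wpt in Hmin by lia.
  assert (H0 : Ffun h a b y = 0) by (pose proof (Ffun_ge0 y); lra).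
  destruct (prodR_eq0_inv h _ H0) as [j [Hj Hz]].
  destruct (prodR_eq0_inv 3 _ Hz) as [i [Hi Hz']].
  exists j, i; repeat split; try lia; now apply dist2_eq0.
- intros [j [i [Hj [Hi ->]]]] y'; rewrite Ffun_wpt by assumption; apply Ffun_ge0.
Qed.

Hypothesis Hb : forall j, (1 <= j <= h)%nat -> 0 < b j.

Lemma quad_gt0 j t : (1 <= j <= h)%nat -> 0 < quad (a j) (b j) t.
Proof.
intros Hj; unfold quad.
apply Rplus_le_lt_0_compat; [apply pow2_ge_0 | apply pow_lt, Hb, Hj].
Qed.

Lemma Ffun_axis_gt0 t : 0 < Ffun h a b (0, 0, t).
Proof. rewrite Ffun_axis; apply pow_lt, prodR_gt0; intros; now apply quad_gt0. Qed.

Lemma not_absolute_min_axis t : (1 <= h)%nat -> ~ absolute_min (Ffun h a b) (0, 0, t).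
Proof.
intros Hh Hmin; specialize (Hmin (wpt a b 1 1)).
rewrite Ffun_wpt in Hmin by lia; pose proof (Ffun_axis_gt0 t); lra.
Qed.

Lemma axis_alpha_gt0_of_neq t j0 : (1 <= j0 <= h)%nat -> a j0 <> t -> 0 < axis_alpha t.
Proof.
intros Hj0 Ha0; apply (prod_deriv_gt0 h _ _ j0); auto.
- intros j Hj; rewrite triple_factor_axis.
  pose proof (quad_gt0 j t Hj); unfold quad in *; unfold triple_factor_hess_axis.
  split; [apply pow_lt; lra|]. pose proof (pow2_ge_0 (t - a j)). nra.
- pose proof (quad_gt0 j0 t Hj0); unfold quad in *; unfold triple_factor_hess_axis.
  assert (0 < (t - a j0) ^ 2) by (rewrite <- Rsqr_pow2; apply Rsqr_pos_lt; lra).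
  nra.
Qed.

(* Relative to its value on the axis, each factor loses at most
   6 |y1| u / b_j^3, while the factor j0 gains 3 u d^2 / Q^2. *)
Lemma Ffun_ge_axis y1 y2 t j0 : (1 <= j0 <= h)%nat -> y1 ^ 2 + y2 ^ 2 <= 1 ->
  6 * Rabs y1 * sumR h (fun j => / b j ^ 3) <= (t - a j0) ^ 2 / quad (a j0) (b j0) t ^ 2 ->
  12 * Rabs y1 * sumR h (fun j => / b j ^ 3) <= 1 ->
  Ffun h a b (0, 0, t) <= Ffun h a b (y1, y2, t).
Proof.
intros Hj0 Hu Hgain Hsmall.
set (u := y1 ^ 2 + y2 ^ 2) in *.
set (C := sumR h (fun j => / b j ^ 3)) in *.
set (p := fun j => 3 * u * (t - a j) ^ 2 / quad (a j) (b j) t ^ 2).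
set (n := fun j => 6 * Rabs y1 * u / b j ^ 3).
assert (Hu0 : 0 <= u) by (unfold u; nra).
assert (Hy1 : 0 <= Rabs y1) by apply Rabs_pos.
assert (Hbinv : forall j, (1 <= j <= h)%nat -> 0 <= / b j ^ 3)
  by (intros j Hj; apply Rlt_le, Rinv_0_lt_compat, pow_lt, Hb, Hj).
assert (HC : 0 <= C) by (apply sumR_ge0; exact Hbinv).
assert (Hn0 : forall j, (1 <= j <= h)%nat -> 0 <= n j)
  by (intros j Hj; apply Rmult_le_pos; [nra | apply Hbinv, Hj]).
assert (Hnu : sumR h n = 6 * Rabs y1 * u * C) by (unfold n, C, Rdiv; apply sumR_scal).
assert (Hnu_half : sumR h n <= 1 / 2) by (rewrite Hnu; nra).
assert (Hnu_gain : 3 * sumR h n <= p j0).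
{ rewrite Hnu; unfold p.
  pose proof (quad_gt0 j0 t Hj0).
  replace (3 * u * (t - a j0) ^ 2 / quad (a j0) (b j0) t ^ 2)
    with (3 * u * ((t - a j0) ^ 2 / quad (a j0) (b j0) t ^ 2)) by (field; lra).
  nra. }
assert (Hfactor : forall j, (1 <= j <= h)%nat ->
  0 <= quad (a j) (b j) t ^ 3 * (1 + p j) * (1 - n j) <= triple_factor (a j) (b j) (y1, y2, t)).
{ intros j Hj; apply triple_factor_lower_bound; [apply Hb, Hj|].
  change (n j <= 1); pose proof (sumR_ge_term h n j Hn0 Hj); lra. }
assert (Hlow := prodR_le h _ _ Hfactor).
rewrite <- Ffun_triple_factor, !prodR_mul, prodR_pow, <- Ffun_axis in Hlow.
assert (Hprod : 1 <= prodR h (fun j => 1 + p j) * prodR h (fun j => 1 - n j)).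
{ apply (prodR_gain_loss h p n j0 Hj0); [|assumption | assumption].
  intros j Hj; split; [|apply Hn0, Hj]; unfold p.
  pose proof (quad_gt0 j t Hj); pose proof (pow2_ge_0 (t - a j)).
  apply Rdiv_le_0_compat; [nra | apply pow_lt; lra]. }
pose proof (Ffun_ge0 (0, 0, t)).
rewrite Rmult_assoc in Hlow. nra.
Qed.
Lemma local_min_of_axis t0 j0 : (1 <= j0 <= h)%nat -> a j0 <> t0 ->
  (exists d, 0 < d /\
     forall t, Rabs (t - t0) < d -> Ffun h a b (0, 0, t0) <= Ffun h a b (0, 0, t)) ->
  local_min (Ffun h a b) (0, 0, t0).
Proof.
intros Hj0 Ha0 [d [Hd Haxis]].
set (g := t0 - a j0).
set (delta := g ^ 2 / 4 / (b j0 ^ 2 + 9 / 4 * g ^ 2) ^ 2).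
set (C := sumR h (fun j => / b j ^ 3)).
assert (Hg : 0 < Rabs g) by (apply Rabs_pos_lt; unfold g; lra).
assert (Hdelta : 0 < delta).
{ assert (0 < g ^ 2) by (rewrite <- pow2_abs; apply pow_lt, Hg).
  pose proof (pow2_ge_0 (b j0)).
  unfold delta; apply Rdiv_lt_0_compat; [lra | apply pow_lt; lra]. }
assert (HC : 0 < C).
{ assert (Hinv : forall j, (1 <= j <= h)%nat -> 0 < / b j ^ 3)
    by (intros; apply Rinv_0_lt_compat, pow_lt, Hb; assumption).
  apply (Rlt_le_trans _ (/ b 1%nat ^ 3)); [apply Hinv; lia|].
  apply (sumR_ge_term h (fun j => / b j ^ 3)); [intros; apply Rlt_le, Hinv|]; lia. }
set (rho := Rmin (Rmin 1 d) (Rmin (Rabs g / 2) (Rmin (delta / (6 * C)) (1 / (12 * C))))).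
assert (Hrho : 0 < rho).
{ unfold rho; repeat apply Rmin_glb_lt; try lra; apply Rdiv_lt_0_compat; lra. }
exists rho; split; [exact Hrho|].
intros [[y1 y2] t] Hy; destruct (dist_axis_lt y1 y2 t t0 rho Hy) as [Hu [Hy1 Ht]].
assert (Hrho1 : rho <= 1) by (unfold rho; eapply Rle_trans; apply Rmin_l).
assert (Hrhod : rho <= d) by (unfold rho; eapply Rle_trans; [apply Rmin_l | apply Rmin_r]).
assert (Hrhog : rho <= Rabs g / 2) by (unfold rho; eapply Rle_trans; [apply Rmin_r | apply Rmin_l]).
assert (Hrhodelta : rho <= delta / (6 * C))
  by (unfold rho; do 2 (eapply Rle_trans; [apply Rmin_r|]); apply Rmin_l).
assert (HrhoC : rho <= 1 / (12 * C))
  by (unfold rho; do 2 (eapply Rle_trans; [apply Rmin_r|]); apply Rmin_r).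
apply (Rle_trans _ (Ffun h a b (0, 0, t))); [apply Haxis; lra|].
apply (Ffun_ge_axis y1 y2 t j0 Hj0).
- assert (rho ^ 2 <= 1) by (simpl; nra). lra.
- apply (Rle_trans _ delta); [|apply quad_ratio_lower_bound; [apply Hb, Hj0 | fold g; lra]].
  assert (H6 : 6 * C * Rabs y1 <= 6 * C * (delta / (6 * C))) by (apply Rmult_le_compat_l; lra).
  replace (6 * C * (delta / (6 * C))) with delta in H6 by (field; lra). fold C; lra.
- assert (H12 : 12 * C * Rabs y1 <= 12 * C * (1 / (12 * C))) by (apply Rmult_le_compat_l; lra).
  replace (12 * C * (1 / (12 * C))) with 1 in H12 by (field; lra). fold C; lra.
Qed.
End FunctionF.

(** * Interlacing roots of P' *)

Section InterlacingRoots.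
Variables (h : nat) (r s : nat -> R) (P : R -> R) (c kappa : R) (a b : nat -> R).
Hypothesis Hh : (2 <= h)%nat.
Hypothesis Hord : forall j, (1 <= j <= h - 1)%nat -> r j < s j /\ s j < r (S j).
Hypothesis Hpos : forall x, 0 < P x.
Hypothesis Hc : 0 < c.
Hypothesis Hder : forall x, derivable_pt_lim P x (split_deriv h r s c x).
Hypothesis Hkappa : 0 < kappa.
Hypothesis Hb : forall j, (1 <= j <= h)%nat -> 0 < b j.
Hypothesis Hfact : forall x, P x = kappa * prodR h (fun j => quad (a j) (b j) x).

Lemma s_lt_r j k : (1 <= j)%nat -> (j < k <= h)%nat -> s j < r k.
Proof.
intros Hj Hjk; induction k as [|k IH]; [lia|].
destruct (Nat.eq_dec j k) as [->|]; [apply Hord; lia|].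
assert (s j < r k) by (apply IH; lia). destruct (Hord k); [lia|]. lra.
Qed.

(* If all a_j were equal to t0, then P' would vanish only at t0, while it
   has the two distinct roots r_1 < r_h. *)
Lemma exists_a_neq t0 : exists j, (1 <= j <= h)%nat /\ a j <> t0.
Proof.
apply NNPP; intros Hn.
assert (Hall : forall j, (1 <= j <= h)%nat -> a j = t0)
  by (intros j Hj; apply NNPP; intros Hne; apply Hn; now exists j).
assert (Hr : r 1 < r h).
{ destruct (Hord 1) as [H1 _]; [lia|]. pose proof (s_lt_r 1 h ltac:(lia) ltac:(lia)). lra. }
assert (Hroot : exists x, split_deriv h r s c x = 0 /\ x <> t0).
{ destruct (Req_dec (r 1) t0).
  - exists (r h); split; [unfold split_deriv; ring | lra].
  - exists (r 1); split; [|assumption].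
    unfold split_deriv; rewrite (prodR_eq0 (h - 1) _ 1); [ring | lia | ring]. }
destruct Hroot as [x [Hx Hxt]].
set (Q := fun j => quad (a j) (b j) x).
assert (HP : derivable_pt_lim P x (kappa * prod_deriv h Q (fun j => 2 * (x - a j)))).
{ replace P with (mult_real_fct kappa (fun y => prodR h (fun j => quad (a j) (b j) y)))
    by (apply functional_extensionality; intros y; now rewrite Hfact).
  apply derivable_pt_lim_scal, (derivable_pt_lim_prodR h (fun j y => quad (a j) (b j) y)).
  intros j; apply is_derive_Reals; unfold quad; auto_derive; auto; ring. }
pose proof (uniqueness_limite _ _ _ _ HP (Hder x)) as E; rewrite Hx in E.
rewrite (prod_deriv_ext h Q _ (fun _ => 2 * (x - t0) * 1)), prod_deriv_scal in E
  by (intros j Hj; rewrite Hall by assumption; ring).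
assert (0 < prod_deriv h Q (fun _ => 1)).
{ apply (prod_deriv_gt0 h Q _ 1); [|lia|lra].
  intros j Hj; split; [unfold Q; now apply (quad_gt0 h a b Hb) | lra]. }
assert (x - t0 <> 0) by lra.
apply Rmult_integral in E as [E|E]; [lra|].
apply Rmult_integral in E as [E|E]; lra.
Qed.

(* t lies strictly between s_(m-1) and s_m (with s_0 = -oo, s_h = +oo). *)
Definition between_s (m : nat) (t : R) : Prop :=
  forall j, (1 <= j <= h - 1)%nat -> ((j < m)%nat -> s j < t) /\ ((m <= j)%nat -> t < s j).

Lemma between_s_r m : (1 <= m <= h)%nat -> between_s m (r m).
Proof.
intros Hm j Hj; split; intros Hjm; [apply s_lt_r; lia|].
destruct (Nat.eq_dec j m) as [->|]; [apply Hord; lia|].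
assert (r m < s m) by (apply Hord; lia). assert (s m < r j) by (apply s_lt_r; lia).
assert (r j < s j) by (apply Hord; lia). lra.
Qed.

Lemma between_s_convex m t t' x :
  between_s m t -> between_s m t' -> t <= x <= t' -> between_s m x.
Proof.
intros Ht Ht' Hx j Hj; destruct (Ht j Hj), (Ht' j Hj).
split; intros Hjm; [specialize (H Hjm) | specialize (H2 Hjm)]; lra.
Qed.

Lemma between_s_nbhd m : (1 <= m <= h)%nat ->
  exists delta, 0 < delta /\ forall t, Rabs (t - r m) < delta -> between_s m t.
Proof.
intros Hm; exists (minR (h - 1) (fun j => Rabs (r m - s j))); split.
- apply minR_gt0; intros j Hj; apply Rabs_pos_lt.
  destruct (between_s_r m Hm j Hj) as [H1 H2].
  destruct (Nat.lt_ge_cases j m); [specialize (H1 H) | specialize (H2 H)]; lra.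
- intros t Ht j Hj.
  pose proof (minR_le (h - 1) (fun j => Rabs (r m - s j)) j Hj) as Hmin; cbv beta in Hmin.
  destruct (between_s_r m Hm j Hj) as [H1 H2]; split; intros Hjm;
    [specialize (H1 Hjm) | specialize (H2 Hjm)]; revert Ht Hmin;
    unfold Rabs; destruct (Rcase_abs (t - r m)), (Rcase_abs (r m - s j)); lra.
Qed.

Definition psi_r (m : nat) (t : R) : R :=
  if Nat.eqb m h then c * prodR (h - 1) (fun j => (t - r j) * (t - s j))
  else c * (t - r h) * (t - s m)
       * prodR (h - 1) (fun j => if Nat.eqb j m then 1 else (t - r j) * (t - s j)).

Lemma split_deriv_at_r m t : (1 <= m <= h)%nat -> split_deriv h r s c t = (t - r m) * psi_r m t.
Proof.
intros Hm; unfold psi_r, split_deriv; destruct (Nat.eqb_spec m h) as [->|]; [ring|].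
rewrite (prodR_factor_out (h - 1) (fun j => (t - r j) * (t - s j)) m) by lia; ring.
Qed.

Lemma psi_r_gt0 m t : (1 <= m <= h)%nat -> between_s m t -> 0 < psi_r m t.
Proof.
intros Hm Hbt.
assert (Hfac : forall j, (1 <= j <= h - 1)%nat -> j <> m -> 0 < (t - r j) * (t - s j)).
{ intros j Hj Hjm; assert (r j < s j) by (apply Hord; lia).
  destruct (Nat.lt_ge_cases j m).
  - destruct (Hbt j Hj) as [H1 _]; specialize (H1 H0); apply Rmult_lt_0_compat; lra.
  - destruct (Hbt j Hj) as [_ H2]; destruct (Hbt (j - 1)%nat) as [_ H3]; [lia|].
    assert (t < s (j - 1)%nat) by (apply H3; lia).
    destruct (Hord (j - 1)%nat) as [_ H4]; [lia|]; replace (S (j - 1)) with j in H4 by lia.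
    assert (t < s j) by (apply H2; lia). nra. }
unfold psi_r; destruct (Nat.eqb_spec m h) as [->|].
- apply Rmult_lt_0_compat, prodR_gt0; auto; intros j Hj; apply Hfac; lia.
- destruct (Hbt m) as [_ Hm2]; [lia|]; specialize (Hm2 (le_n m)).
  assert (s m < r h) by (apply s_lt_r; lia).
  assert (0 < prodR (h - 1) (fun j => if Nat.eqb j m then 1 else (t - r j) * (t - s j))).
  { apply prodR_gt0; intros j Hj; destruct (Nat.eqb_spec j m); [lra | apply Hfac; auto]. }
  assert (0 < (t - r h) * (t - s m)) by nra.
  rewrite (Rmult_assoc c); apply Rmult_lt_0_compat; [apply Rmult_lt_0_compat|]; assumption.
Qed.

(* Mean value theorem: P' has the sign of t - r_m between s_(m-1) and s_m. *)
Lemma P_ge_between_s m t : (1 <= m <= h)%nat -> between_s m t -> P (r m) <= P t.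
Proof.
intros Hm Hbt; pose proof (between_s_r m Hm) as Hbr.
destruct (Rtotal_order t (r m)) as [Hlt|[->|Hgt]]; [| lra |].
- destruct (MVT_cor2 P (split_deriv h r s c) t (r m) Hlt (fun x _ => Hder x)) as [x [E Hx]].
  assert (0 < psi_r m x) by (apply psi_r_gt0, (between_s_convex m t (r m)); auto; lra).
  rewrite (split_deriv_at_r m) in E by assumption.
  assert ((x - r m) * psi_r m x < 0) by (assert (x - r m < 0) by lra; nra). nra.
- destruct (MVT_cor2 P (split_deriv h r s c) (r m) t Hgt (fun x _ => Hder x)) as [x [E Hx]].
  assert (0 < psi_r m x) by (apply psi_r_gt0, (between_s_convex m (r m) t); auto; lra).
  rewrite (split_deriv_at_r m) in E by assumption.
  assert (0 < (x - r m) * psi_r m x) by (assert (0 < x - r m) by lra; nra). nra.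
Qed.

Definition psi_s (m : nat) (t : R) : R :=
  c * (t - r h) * (t - r m)
  * prodR (h - 1) (fun j => if Nat.eqb j m then 1 else (t - r j) * (t - s j)).

Lemma split_deriv_at_s m t : (1 <= m <= h - 1)%nat ->
  split_deriv h r s c t = (t - s m) * psi_s m t.
Proof.
intros Hm; unfold psi_s, split_deriv.
rewrite (prodR_factor_out (h - 1) (fun j => (t - r j) * (t - s j)) m) by lia; ring.
Qed.

Lemma psi_s_lt0 m : (1 <= m <= h - 1)%nat -> psi_s m (s m) < 0.
Proof.
intros Hm; unfold psi_s.
assert (0 < prodR (h - 1) (fun j => if Nat.eqb j m then 1 else (s m - r j) * (s m - s j))).
{ apply prodR_gt0; intros j Hj; destruct (Nat.eqb_spec j m); [lra|].
  assert (r j < s j) by (apply Hord; lia).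
  destruct (Nat.lt_ge_cases j m).
  - assert (s j < r m) by (apply s_lt_r; lia). assert (r m < s m) by (apply Hord; lia).
    apply Rmult_lt_0_compat; lra.
  - assert (s m < r j) by (apply s_lt_r; lia). nra. }
assert (s m < r h) by (apply s_lt_r; lia). assert (r m < s m) by (apply Hord; lia).
assert ((s m - r h) * (s m - r m) < 0) by nra.
assert (c * ((s m - r h) * (s m - r m)) < 0) by nra.
rewrite (Rmult_assoc c); nra.
Qed.

Lemma ex_derive_psi_r m t : ex_derive (psi_r m) t.
Proof.
unfold psi_r; destruct (Nat.eqb m h).
- apply ex_derive_scal, (ex_derive_prodR (h - 1) (fun j t => (t - r j) * (t - s j))).
  intros; auto_derive; auto.
- apply (ex_derive_mult (fun t => c * (t - r h) * (t - s m))); [auto_derive; auto|].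
  apply (ex_derive_prodR (h - 1) (fun j t => if Nat.eqb j m then 1 else (t - r j) * (t - s j))).
  intros j; destruct (Nat.eqb j m); [apply ex_derive_const | auto_derive; auto].
Qed.

Lemma ex_derive_psi_s m t : ex_derive (psi_s m) t.
Proof.
apply (ex_derive_mult (fun t => c * (t - r h) * (t - r m))); [auto_derive; auto|].
apply (ex_derive_prodR (h - 1) (fun j t => if Nat.eqb j m then 1 else (t - r j) * (t - s j))).
intros j; destruct (Nat.eqb j m); [apply ex_derive_const | auto_derive; auto].
Qed.

Lemma Ffun_axis_P t : Ffun h a b (0, 0, t) = (P t / kappa) ^ 3.
Proof. rewrite Ffun_axis, Hfact; f_equal; field; lra. Qed.

Definition axis_slope (t : R) : R := 3 * (P t / kappa) ^ 2 * (split_deriv h r s c t / kappa).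

Lemma Ffun_axis_derivable t :
  derivable_pt_lim (fun s => Ffun h a b (0, 0, s)) t (axis_slope t).
Proof.
replace (fun s => Ffun h a b (0, 0, s)) with (fun s => (P s / kappa) ^ 3)
  by (apply functional_extensionality; intros; symmetry; apply Ffun_axis_P).
replace (axis_slope t) with (3 * (P t / kappa) ^ 2 * (1 / kappa) * split_deriv h r s c t)
  by (unfold axis_slope; field; lra).
apply (derivable_pt_lim_comp P (fun z => (z / kappa) ^ 3)); [apply Hder|].
apply is_derive_Reals; auto_derive; [auto | field; lra].
Qed.

Lemma Fhess_axis_at_root t0 psi :
  (forall t, split_deriv h r s c t = (t - t0) * psi t) -> ex_derive psi t0 ->
  Fhess_axis h a b t0 2 2 = 3 * (P t0 / kappa) ^ 2 * (psi t0 / kappa).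
Proof.
intros Hpsi Hdpsi.
apply (Fhess_vertical_axis h a b axis_slope); [exact Ffun_axis_derivable|].
replace axis_slope with (fun t => 3 * (P t / kappa) ^ 2 * ((t - t0) * psi t / kappa))
  by (apply functional_extensionality; intros; unfold axis_slope; now rewrite Hpsi).
assert (HP : ex_derive P t0) by (exists (split_deriv h r s c t0); apply is_derive_Reals, Hder).
apply is_derive_Reals; auto_derive; [repeat split; auto|].
replace (t0 - t0) with 0 by ring; field; lra.
Qed.

Lemma axis_alpha_gt0 t : 0 < axis_alpha h a b t.
Proof.
destruct (exists_a_neq t) as [j [Hj Ha]].
now apply (axis_alpha_gt0_of_neq h a b Hb t j).
Qed.

Lemma nondegenerate_axis t0 psi :
  (forall t, split_deriv h r s c t = (t - t0) * psi t) -> ex_derive psi t0 -> psi t0 <> 0 ->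
  nondegenerate_critical_point (Ffun h a b) (0, 0, t0).
Proof.
intros Hpsi Hdpsi Hnz; split.
- apply (critical_point_axis h a b axis_slope); [exact Ffun_axis_derivable|].
  unfold axis_slope; rewrite Hpsi; field; lra.
- exists (diag3 (axis_hessian_diag h a b t0)); split; [apply is_hessian_axis|].
  rewrite det3_diag3; unfold axis_hessian_diag; simpl.
  rewrite (Fhess_axis_at_root t0 psi) by assumption.
  pose proof (axis_alpha_gt0 t0); pose proof (Hpos t0).
  assert (0 < (P t0 / kappa) ^ 2) by (apply pow_lt, Rdiv_lt_0_compat; lra).
  assert (psi t0 / kappa <> 0) by (unfold Rdiv; apply Rmult_integral_contrapositive;
    split; [assumption | apply Rinv_neq_0_compat; lra]).
  apply Rmult_integral_contrapositive; split; [nra|].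
  apply Rmult_integral_contrapositive; split; [lra | assumption].
Qed.

Lemma negativity_index_axis t0 psi :
  (forall t, split_deriv h r s c t = (t - t0) * psi t) -> ex_derive psi t0 -> psi t0 < 0 ->
  negativity_index (Ffun h a b) (0, 0, t0) 1.
Proof.
intros Hpsi Hdpsi Hneg.
exists (diag3 (axis_hessian_diag h a b t0)); split; [apply is_hessian_axis|].
replace 1%nat with (is_neg (axis_hessian_diag h a b t0 0) + is_neg (axis_hessian_diag h a b t0 1)
  + is_neg (axis_hessian_diag h a b t0 2))%nat; [apply num_neg_eigenvalues_diag3|].
unfold axis_hessian_diag, is_neg; simpl.
rewrite (Fhess_axis_at_root t0 psi) by assumption.
pose proof (axis_alpha_gt0 t0); pose proof (Hpos t0).
assert (0 < (P t0 / kappa) ^ 2) by (apply pow_lt, Rdiv_lt_0_compat; lra).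
assert (psi t0 / kappa < 0) by (unfold Rdiv; pose proof (Rinv_0_lt_compat kappa Hkappa); nra).
destruct (Rlt_dec (axis_alpha h a b t0) 0); [lra|].
destruct (Rlt_dec (3 * (P t0 / kappa) ^ 2 * (psi t0 / kappa)) 0); [reflexivity | nra].
Qed.

Lemma local_min_axis_r m : (1 <= m <= h)%nat -> local_min (Ffun h a b) (0, 0, r m).
Proof.
intros Hm; destruct (exists_a_neq (r m)) as [j0 [Hj0 Ha0]].
apply (local_min_of_axis h a b Hb (r m) j0 Hj0 Ha0).
destruct (between_s_nbhd m Hm) as [d [Hd Hnear]]; exists d; split; [exact Hd|].
intros t Ht; rewrite !Ffun_axis_P; pose proof (Hpos (r m)).
apply pow_incr; split; [apply Rlt_le, Rdiv_lt_0_compat; lra|].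
apply Rmult_le_compat_r; [apply Rlt_le, Rinv_0_lt_compat; lra|].
apply (P_ge_between_s m t Hm), Hnear, Ht.
Qed.
Lemma wpt_injective j i j' i' : (1 <= j <= h)%nat -> (1 <= i <= 3)%nat ->
  (1 <= j' <= h)%nat -> (1 <= i' <= 3)%nat -> (j, i) <> (j', i') -> wpt a b j i <> wpt a b j' i'.
Proof.
intros Hj Hi Hj' Hi' Hne Heq; unfold wpt in Heq; injection Heq as E1 E2 E3.
assert (Hbj : 0 < b j) by (apply Hb; auto). assert (Hbj' : 0 < b j') by (apply Hb; auto).
assert (Hnorm : forall x th, (x * cos th) ^ 2 + (x * sin th) ^ 2 = x ^ 2).
{ intros x th; pose proof (sin2_cos2 th) as Hs; unfold Rsqr in Hs.
  transitivity (x ^ 2 * (sin th * sin th + cos th * cos th)); [ring | rewrite Hs; ring]. }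
assert (Hbb : b j = b j').
{ assert (b j ^ 2 = b j' ^ 2) by (rewrite <- (Hnorm (b j) (2 * PI * INR i / 3)),
    <- (Hnorm (b j') (2 * PI * INR i' / 3)), E1, E2; reflexivity).
  nra. }
destruct (Nat.eq_dec j j') as [<-|Hjj].
- assert (Hii : i <> i') by (intros ->; now apply Hne).
  apply Rmult_eq_reg_l in E1, E2; try lra.
  pose proof (sqrt_lt_R0 3 ltac:(lra)).
  destruct cos_sin_2PI_3 as [T1 T2], cos_sin_4PI_3 as [T3 T4], cos_sin_6PI_3 as [T5 T6].
  destruct i as [|[|[|[|i]]]], i' as [|[|[|[|i']]]]; try lia; simpl INR in E1, E2;
    rewrite ?T1, ?T2, ?T3, ?T4, ?T5, ?T6 in E1, E2; lra.
- apply (quad_factors_distinct h r s P c kappa a b j j'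
    (Rgt_not_eq _ _ Hc) (Rgt_not_eq _ _ Hkappa) Hder Hfact); try lia.
  + exact (Rgt_not_eq _ _ Hbj).
  + now rewrite E3, Hbb.
Qed.
End InterlacingRoots.

Theorem proposition8p1
  (h : nat) (Hh : (2 <= h)%nat)
  (r s : nat -> R)
  (Hord : forall j, (1 <= j <= h - 1)%nat -> r j < s j /\ s j < r (S j))
  (P : R -> R)
  (Hpoly : exists p : nat -> R, p (2 * h)%nat > 0 /\
             forall x, P x = sum_f_R0 (fun k => p k * x ^ k) (2 * h))
  (Hpos : forall x, P x > 0)
  (c : R) (Hc : c > 0)
  (Hder : forall x, derivable_pt_lim P x
            (c * (x - r h) * prodR (h - 1) (fun j => (x - r j) * (x - s j))))
  (kappa : R) (a b : nat -> R) (Hkappa : kappa > 0)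
  (Hb : forall j, (1 <= j <= h)%nat -> b j > 0)
  (Hfact : forall x, P x = kappa * prodR h (fun j => (x - a j) ^ 2 + b j ^ 2)) :
  (forall j i j' i', (1 <= j <= h)%nat -> (1 <= i <= 3)%nat ->
     (1 <= j' <= h)%nat -> (1 <= i' <= 3)%nat ->
     (j, i) <> (j', i') -> wpt a b j i <> wpt a b j' i')
  /\
  (forall j, (1 <= j <= h)%nat ->
     nondegenerate_critical_point (Ffun h a b) (0, 0, r j) /\
     local_min (Ffun h a b) (0, 0, r j) /\
     ~ absolute_min (Ffun h a b) (0, 0, r j))
  /\
  (forall j, (1 <= j <= h - 1)%nat ->
     nondegenerate_critical_point (Ffun h a b) (0, 0, s j) /\
     negativity_index (Ffun h a b) (0, 0, s j) 1)
  /\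
  (forall y, absolute_min (Ffun h a b) y <->
     exists j i, (1 <= j <= h)%nat /\ (1 <= i <= 3)%nat /\ y = wpt a b j i).
Proof.
clear Hpoly.
split; [|split; [|split]].
- intros j i j' i' Hj Hi Hj' Hi'.
  apply (wpt_injective h r s P c kappa a b); assumption.
- intros m Hm; split; [|split].
  + apply (nondegenerate_axis h r s P c kappa a b) with (psi := psi_r h r s c m); try assumption.
    * intros t; now apply split_deriv_at_r.
    * apply ex_derive_psi_r.
    * apply Rgt_not_eq, (psi_r_gt0 h r s c); try assumption; now apply between_s_r.
  + apply (local_min_axis_r h r s P c kappa a b); assumption.
  + apply not_absolute_min_axis; [assumption | lia].
- intros m Hm; split.
  + apply (nondegenerate_axis h r s P c kappa a b) with (psi := psi_s h r s c m); try assumption.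
    * intros t; now apply split_deriv_at_s.
    * apply ex_derive_psi_s.
    * apply Rlt_not_eq, (psi_s_lt0 h r s c); assumption.
  + apply (negativity_index_axis h r s P c kappa a b) with (psi := psi_s h r s c m); try assumption.
    * intros t; now apply split_deriv_at_s.
    * apply ex_derive_psi_s.
    * apply (psi_s_lt0 h r s c); assumption.
- intros y; apply absolute_min_Ffun_iff; lia.
Qed.
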